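(* No graph in $\mathfrak D_4$ contains an induced cube, i.e. an induced subgraph isomorphic to the graph obtained from $K_{4,4}$ by deleting a perfect matching.
   Context: $\mathfrak D_4$ is the class of (finite) maximal triangle-free graphs satisfying property $\mathscr{D}_4$. Maximal triangle-free: no triangle, and adding any new edge creates a triangle. Property $\mathscr{D}_k$: for every $m\in\{1,\dots,k\}$ and every sequence $x_1,\dots,x_{3m}$ of (not necessarily distinct) vertices there is a vertex $y$ with $|\{i\in[3m]: x_iy\in E(G)\}|\ge m+1$. *)

From mathcomp Require Import all_boot.
Set Implicit Arguments. Unset Strict Implicit. Unset Printing Implicit Defensive.

Definition simple_graph (T : finType) (e : rel T) : Prop :=
  symmetric e /\ irreflexive e.

Definition triangle_free (T : finType) (e : rel T) : Prop :=
  forall x y z : T, ~ [/\ e x y, e y z & e x z].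

Definition maximal_triangle_free (T : finType) (e : rel T) : Prop :=
  triangle_free e /\
  forall x y : T, x != y -> ~~ e x y -> exists z, e x z && e z y.

(* Property D_k: for all m in {1..k} and all sequences x_1..x_{3m} of
   vertices (not necessarily distinct) there is a vertex y adjacent to at
   least m+1 of the x_i (counted with index multiplicity). *)
Definition prop_D (k : nat) (T : finType) (e : rel T) : Prop :=
  forall m : nat, 1 <= m <= k ->
  forall x : 'I_(3 * m) -> T,
  exists y : T, m.+1 <= #|[set i : 'I_(3 * m) | e (x i) y]|.

Definition in_frakD4 (T : finType) (e : rel T) : Prop :=
  [/\ simple_graph e, maximal_triangle_free e & prop_D 4 e].

(* The cube Q_3 = K_{4,4} minus a perfect matching: vertices (s, i) with
   side s in 'I_2 and index i in 'I_4; (s,i) ~ (t,j) iff s != t and i != j. *)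
Definition cube_adj (a b : 'I_2 * 'I_4) : bool := (a.1 != b.1) && (a.2 != b.2).

Definition has_induced_cube (T : finType) (e : rel T) : Prop :=
  exists f : 'I_2 * 'I_4 -> T,
    injective f /\ forall a b, e (f a) (f b) = cube_adj a b.

(* Let A_i, B_i (i < 4) be the two sides of the cube, A_i ~ B_j iff i != j.
   By maximality, A_i and B_i have a common neighbour z_i.  For i != j the six
   vertices A_i B_j z_j A_j B_i z_i form a hexagon, so applying D_2 to them
   yields a vertex adjacent to one of its two colour classes; either way we
   find adjacent vertices u, v with u a common neighbour of A_i, B_i and v
   one of A_j, B_j.  Doing this for the pairs 01 and 23 gives a 12-vertex
   graph whose independence number is 4, and in a triangle-free graph the
   neighbours of any vertex form an independent set; this contradicts D_4. *)

From mathcomp Require Import all_boot.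

Set Implicit Arguments.
Unset Strict Implicit.
Unset Printing Implicit Defensive.

(* Vertex subsets are given by explicit indicator bits, so that the finite
   checks below are plain case analysis. *)
Definition stable_bits (c : seq bool) (es : seq (nat * nat)) : bool :=
  all (fun p => ~~ (nth false c p.1 && nth false c p.2)) es.

Definition hexagon_edges : seq (nat * nat) :=
  [:: (0, 1); (1, 2); (2, 3); (3, 4); (4, 5); (5, 0)].

(* Vertices 0..3 and 4..7 are the two sides of the cube, 8 and 9 are common
   neighbours of the antipodal pairs (0, 4) and (1, 5), 10 and 11 those of
   (2, 6) and (3, 7). *)
Definition cube_ladder_edges : seq (nat * nat) :=
  [:: (0, 5); (0, 6); (0, 7); (1, 4); (1, 6); (1, 7);
      (2, 4); (2, 5); (2, 7); (3, 4); (3, 5); (3, 6);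
      (0, 8); (4, 8); (1, 9); (5, 9); (8, 9);
      (2, 10); (6, 10); (3, 11); (7, 11); (10, 11)].

Lemma hexagon_stable3 (c0 c1 c2 c3 c4 c5 : bool) :
  stable_bits [:: c0; c1; c2; c3; c4; c5] hexagon_edges ->
  2 < count id [:: c0; c1; c2; c3; c4; c5] ->
  [&& c0, c2 & c4] || [&& c1, c3 & c5].
Proof. by case: c0; case: c1; case: c2; case: c3; case: c4; case: c5. Qed.

Lemma cube_ladder_stable_le4 (c0 c1 c2 c3 c4 c5 c6 c7 c8 c9 c10 c11 : bool) :
  stable_bits [:: c0; c1; c2; c3; c4; c5; c6; c7; c8; c9; c10; c11]
    cube_ladder_edges ->
  count id [:: c0; c1; c2; c3; c4; c5; c6; c7; c8; c9; c10; c11] <= 4.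
Proof.
by case: c0; case: c1; case: c2; case: c3; case: c4; case: c5;
   case: c6; case: c7; case: c8; case: c9; case: c10; case: c11.
Qed.

Section Neighbourhoods.
Variables (T : finType) (e : rel T).

Lemma card_nth_set n (x0 : T) (p : pred T) (s : seq T) :
  size s = n -> #|[set i : 'I_n | p (nth x0 s i)]| = count p s.
Proof.
move=> <-; rewrite -[in RHS](mkseq_nth x0 s) count_map.
rewrite -val_enum_ord count_map -size_filter cardsE cardE /enum_mem.
by congr size; rewrite -filter_predI; apply: eq_filter => i /=;
  rewrite [i \in 'I_(size s)]inE andbT unfold_in.
Qed.

Lemma prop_D_count k m (s : seq T) :
  prop_D k e -> 0 < m <= k -> size s = 3 * m ->
  exists y, m < count (e^~ y) s.
Proof.
case: s => [|x0 s] hD hm hs; first by move: hs; case: m hm.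
have [y hy] := hD m hm (fun i => nth x0 (x0 :: s) i).
by exists y; rewrite -(card_nth_set x0 _ hs).
Qed.

Hypothesis triangle_free_e : triangle_free e.

Lemma edge_no_common_nbr u v y : e u v -> ~~ (e u y && e v y).
Proof.
by move=> huv; apply/negP => /andP [huy hvy]; apply: triangle_free_e (And3 huv hvy huy).
Qed.

Lemma nbr_bits_stable (x0 : T) (s : seq T) es y :
  all (fun p => e (nth x0 s p.1) (nth x0 s p.2)) es ->
  stable_bits (map (e^~ y) s) es.
Proof.
move=> /allP hes; apply/allP => [[i j]] /hes /= hij.
have [hi|hi] := ltnP i (size s); last by rewrite nth_default ?size_map.
have [hj|hj] := ltnP j (size s); last by rewrite [nth _ _ j]nth_default ?size_map ?andbF.
by rewrite !(nth_map x0) //; apply: edge_no_common_nbr.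
Qed.

End Neighbourhoods.

Section InducedCube.
Variables (T : finType) (e : rel T).
Hypotheses (symmetric_e : symmetric e) (triangle_free_e : triangle_free e).
Hypothesis maximal_e : forall x y : T, x != y -> ~~ e x y -> exists z, e x z && e z y.
Hypothesis D4_e : prop_D 4 e.
Variable f : 'I_2 * 'I_4 -> T.
Hypotheses (f_inj : injective f) (f_induced : forall a b, e (f a) (f b) = cube_adj a b).

Let A i := f (ord0, i).
Let B i := f (ord_max, i).

Lemma cube_AB i j : i != j -> e (A i) (B j).
Proof. by move=> hij; rewrite f_induced /cube_adj /= hij. Qed.

Lemma cube_antipodal_common_nbr i : exists z, e (A i) z && e (B i) z.
Proof.
have hAB : A i != B i by apply/negP => /eqP /f_inj [].
have nAB : ~~ e (A i) (B i) by rewrite f_induced /cube_adj eqxx andbF.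
have [z /andP [hAz hzB]] := maximal_e hAB nAB.
by exists z; rewrite hAz symmetric_e.
Qed.

Lemma cube_adjacent_common_nbrs i j : i != j -> exists u v,
  [/\ e (A i) u, e (B i) u, e (A j) v, e (B j) v & e u v].
Proof.
move=> hij; have hji : j != i by rewrite eq_sym.
have [zi /andP [hAzi hBzi]] := cube_antipodal_common_nbr i.
have [zj /andP [hAzj hBzj]] := cube_antipodal_common_nbr j.
have [y hy] := prop_D_count (m := 2) (s := [:: A i; B j; zj; A j; B i; zi]) D4_e isT erefl.
have hexagon : all (fun p => e (nth zi [:: A i; B j; zj; A j; B i; zi] p.1)
                                (nth zi [:: A i; B j; zj; A j; B i; zi] p.2))
                   hexagon_edges.
  by rewrite /= !cube_AB // hBzj hBzi (symmetric_e zj) (symmetric_e zi) hAzj hAzi.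
case/orP: (hexagon_stable3 (nbr_bits_stable triangle_free_e y hexagon) hy).
  by case/and3P => hAy hzjy hBy; exists y, zj; split; rewrite // symmetric_e.
by case/and3P => hBy hAy hziy; exists zi, y.
Qed.

End InducedCube.

Theorem mainTheorem11 (T : finType) (e : rel T) :
  in_frakD4 e -> ~ has_induced_cube e.
Proof.
case=> [[symmetric_e _] [triangle_free_e maximal_e] D4_e] [f [f_inj f_induced]].
pose o k := @Ordinal 4 k; pose A i := f (ord0, i); pose B i := f (ord_max, i).
have [u1 [v1 [Au1 Bu1 Av1 Bv1 uv1]]] :=
  cube_adjacent_common_nbrs symmetric_e triangle_free_e maximal_e D4_e f_inj f_induced
    (i := o 0 isT) (j := o 1 isT) isT.
have [u2 [v2 [Au2 Bu2 Av2 Bv2 uv2]]] :=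
  cube_adjacent_common_nbrs symmetric_e triangle_free_e maximal_e D4_e f_inj f_induced
    (i := o 2 isT) (j := o 3 isT) isT.
pose s := [:: A (o 0 isT); A (o 1 isT); A (o 2 isT); A (o 3 isT);
              B (o 0 isT); B (o 1 isT); B (o 2 isT); B (o 3 isT); u1; v1; u2; v2].
have ladder : all (fun p => e (nth u1 s p.1) (nth u1 s p.2)) cube_ladder_edges.
  by rewrite /= !f_induced Au1 Bu1 Av1 Bv1 uv1 Au2 Bu2 Av2 Bv2 uv2.
have [y hy] := prop_D_count (m := 4) (s := s) D4_e isT erefl.
have := cube_ladder_stable_le4 (nbr_bits_stable triangle_free_e y ladder).
by rewrite leqNgt hy.
Qed.
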